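(* Let $(A,\cdot,\circ)$ be a skew brace and $B$, $C$ sub-skew braces with $A = B\cdot C$ and $A = B\circ C$. If both $B$ and $C$ are trivial skew braces, then $A*A = (B*C)\cdot(C*B)$.
   Context: A skew brace is a set $A$ with two group operations $\cdot$ (often written by juxtaposition) and $\circ$ such that $a\circ(bc) = (a\circ b)\,a^{-1}\,(a\circ c)$ for all $a,b,c\in A$. $a^{-1}$ denotes the inverse in $(A,\cdot)$. Define $a*b = a^{-1}(a\circ b)b^{-1}$; for subsets $X,Y$, $X*Y$ is the subgroup of $(A,\cdot)$ generated by all $x*y$ ($x\in X,y\in Y$). A sub-skew brace is a subset that is a subgroup of both groups; it is trivial if $a\circ b=ab$ for all its elements. $A=B\cdot C$ (resp. $A=B\circ C$) means every element is $bc$ (resp. $b\circ c$) with $b\in B$, $c\in C$. *)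

Record SkewBrace := {
  carrier :> Type;
  mul : carrier -> carrier -> carrier;
  inv : carrier -> carrier;
  one : carrier;
  circ : carrier -> carrier -> carrier;
  cinv : carrier -> carrier;
  cone : carrier;
  mulA : forall a b c, mul a (mul b c) = mul (mul a b) c;
  mul1x : forall a, mul one a = a;
  mulx1 : forall a, mul a one = a;
  mulVx : forall a, mul (inv a) a = one;
  mulxV : forall a, mul a (inv a) = one;
  circA : forall a b c, circ a (circ b c) = circ (circ a b) c;
  circ1x : forall a, circ cone a = a;
  circx1 : forall a, circ a cone = a;
  circVx : forall a, circ (cinv a) a = cone;
  circxV : forall a, circ a (cinv a) = cone;
  brace_compat : forall a b c,
    circ a (mul b c) = mul (mul (circ a b) (inv a)) (circ a c)
}.

Arguments mul {s}.
Arguments inv {s}.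
Arguments one {s}.
Arguments circ {s}.
Arguments cinv {s}.
Arguments cone {s}.

Section Defs.
Variable A : SkewBrace.

Definition subset := A -> Prop.

Definition is_mul_subgroup (H : subset) : Prop :=
  H one /\ (forall x y, H x -> H y -> H (mul x y)) /\ (forall x, H x -> H (inv x)).

Definition is_circ_subgroup (H : subset) : Prop :=
  H cone /\ (forall x y, H x -> H y -> H (circ x y)) /\ (forall x, H x -> H (cinv x)).

Definition is_sub_skew_brace (B : subset) : Prop :=
  is_mul_subgroup B /\ is_circ_subgroup B.

Definition is_trivial_on (B : subset) : Prop :=
  forall a b, B a -> B b -> circ a b = mul a b.

Definition star (a b : A) : A := mul (mul (inv a) (circ a b)) (inv b).

Definition gen_mul_subgroup (S : subset) : subset :=
  fun x => forall H : subset, is_mul_subgroup H -> (forall s, S s -> H s) -> H x.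

Definition star_set (X Y : subset) : subset :=
  gen_mul_subgroup (fun z => exists x y, X x /\ Y y /\ z = star x y).

Definition mul_set (X Y : subset) : subset :=
  fun z => exists x y, X x /\ Y y /\ z = mul x y.

Definition circ_set (X Y : subset) : subset :=
  fun z => exists x y, X x /\ Y y /\ z = circ x y.

Definition full_set : subset := fun _ => True.

End Defs.

Arguments star {A}.
Arguments star_set {A}.
Arguments mul_set {A}.
Arguments circ_set {A}.
Arguments full_set {A}.
Arguments is_sub_skew_brace {A}.
Arguments is_trivial_on {A}.


(* Write λ_a(x) = a⁻¹(a∘x).  Each λ_a is an automorphism of (A,·) and
   λ_{a∘b} = λ_a λ_b, which gives the two expansion rules
     a*(xy)   = (a*x) · x(a*y)x⁻¹,
     (a∘b)*c  = (a*(b*c)) · (b*c)(a*c)(b*c)⁻¹.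
   In a trivial sub-skew brace b*b' = 1.  Using A = C·B, every b*z with b ∈ B
   therefore lies in B*C (and symmetrically c*z ∈ C*B); consequently B*C is a
   normal subgroup of (A,·), so (B*C)·(C*B) is a subgroup.  Writing x = b∘c,
   the second expansion rule shows that every generator x*y of A*A lies in
   (B*C)·(C*B), which gives A*A ⊆ (B*C)·(C*B); the reverse inclusion holds
   because B*C and C*B are both contained in A*A. *)

Section GroupLaws.
Variable A : SkewBrace.

Lemma mulA' (a b c : A) : mul (mul a b) c = mul a (mul b c).
Proof. symmetry; apply mulA. Qed.

Lemma mulKV (x y : A) : mul x (mul (inv x) y) = y.
Proof. rewrite mulA, mulxV, mul1x; reflexivity. Qed.

Lemma mulVK (x y : A) : mul (inv x) (mul x y) = y.
Proof. rewrite mulA, mulVx, mul1x; reflexivity. Qed.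

Lemma inv_uniq (x y : A) : mul x y = one -> inv x = y.
Proof. intro Hxy. rewrite <- (mulx1 _ (inv x)), <- Hxy, mulVK. reflexivity. Qed.

Lemma inv_inv (x : A) : inv (inv x) = x.
Proof. apply inv_uniq, mulVx. Qed.

Lemma inv_mul (x y : A) : inv (mul x y) = mul (inv y) (inv x).
Proof. apply inv_uniq. rewrite mulA', mulKV, mulxV. reflexivity. Qed.

Lemma inv_one : inv (@one A) = one.
Proof. apply inv_uniq, mul1x. Qed.

End GroupLaws.

Ltac group_simpl := repeat progress rewrite ?mulA', ?mulKV, ?mulVK, ?mul1x,
  ?mulx1, ?mulxV, ?mulVx, ?inv_mul, ?inv_inv, ?inv_one.

Section LambdaMap.
Variable A : SkewBrace.

(* λ_a(x) = a⁻¹(a∘x), so that a*b = λ_a(b) b⁻¹ by definition. *)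
Definition lam (a x : A) : A := mul (inv a) (circ a x).

(* The brace compatibility law says exactly that λ_a is multiplicative. *)
Lemma lam_mul (a x y : A) : lam a (mul x y) = mul (lam a x) (lam a y).
Proof. unfold lam. rewrite brace_compat. group_simpl. reflexivity. Qed.

Lemma lam_one (a : A) : lam a one = one.
Proof.
  assert (Hsq : mul (lam a one) (lam a one) = mul (lam a one) one)
    by (rewrite <- lam_mul, !mulx1; reflexivity).
  rewrite <- (mulVK _ (lam a one) (lam a one)), Hsq, mulVK. reflexivity.
Qed.

Lemma lam_inv (a x : A) : lam a (inv x) = inv (lam a x).
Proof. symmetry. apply inv_uniq. rewrite <- lam_mul, mulxV. apply lam_one. Qed.

Lemma lam_circ (a b c : A) : lam (circ a b) c = lam a (lam b c).
Proof.
  assert (Hbc : mul b (lam b c) = circ b c) by (unfold lam; group_simpl; reflexivity).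
  assert (Hsplit : lam a (circ b c) = mul (lam a b) (lam a (lam b c)))
    by (rewrite <- Hbc; apply lam_mul).
  replace (lam a (lam b c)) with (mul (inv (lam a b)) (lam a (circ b c)))
    by (rewrite Hsplit; group_simpl; reflexivity).
  unfold lam. rewrite circA. group_simpl. reflexivity.
Qed.

Lemma star_mul_r (a x y : A) :
  star a (mul x y) = mul (star a x) (mul x (mul (star a y) (inv x))).
Proof.
  unfold star. fold (lam a (mul x y)) (lam a x) (lam a y).
  rewrite lam_mul. group_simpl. reflexivity.
Qed.

Lemma star_circ_l (a b c : A) :
  star (circ a b) c = mul (star a (star b c)) (mul (star b c) (star a c)).
Proof.
  unfold star. fold (lam (circ a b) c) (lam b c) (lam a c).
  fold (lam a (mul (lam b c) (inv c))).
  rewrite lam_circ, lam_mul, lam_inv. group_simpl. reflexivity.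
Qed.

End LambdaMap.

Section GeneratedSubgroups.
Variable A : SkewBrace.

Definition conj (g x : A) : A := mul g (mul x (inv g)).

Lemma gen_sub (S : subset A) (s : A) : S s -> gen_mul_subgroup A S s.
Proof. intros Hs H _ HS. apply HS, Hs. Qed.

Lemma gen_is_subgroup (S : subset A) : is_mul_subgroup A (gen_mul_subgroup A S).
Proof.
  split; [|split].
  - intros H [H1 _] _. exact H1.
  - intros x y Hx Hy H HH HS. destruct HH as [H1 [HM HI]].
    apply HM; [apply Hx | apply Hy]; repeat split; assumption.
  - intros x Hx H HH HS. destruct HH as [H1 [HM HI]].
    apply HI, Hx; repeat split; assumption.
Qed.

Lemma gen_one (S : subset A) : gen_mul_subgroup A S one.
Proof. apply gen_is_subgroup. Qed.

Lemma gen_mul (S : subset A) (x y : A) :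
  gen_mul_subgroup A S x -> gen_mul_subgroup A S y -> gen_mul_subgroup A S (mul x y).
Proof. apply gen_is_subgroup. Qed.

Lemma gen_inv (S : subset A) (x : A) :
  gen_mul_subgroup A S x -> gen_mul_subgroup A S (inv x).
Proof. apply gen_is_subgroup. Qed.

Lemma gen_mono (S T : subset A) :
  (forall s, S s -> T s) -> forall x, gen_mul_subgroup A S x -> gen_mul_subgroup A T x.
Proof. intros HST x Hx. apply Hx; [apply gen_is_subgroup | intros s Hs; apply gen_sub, HST, Hs]. Qed.

Lemma gen_normal (S : subset A) :
  (forall g s, S s -> gen_mul_subgroup A S (conj g s)) ->
  forall g x, gen_mul_subgroup A S x -> gen_mul_subgroup A S (conj g x).
Proof.
  intros HS g x Hx. unfold conj.
  apply (Hx (fun x => gen_mul_subgroup A S (conj g x))); [split; [|split] | exact (HS g)];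
    unfold conj.
  - group_simpl. apply gen_one.
  - intros u v Hu Hv.
    replace (mul g (mul (mul u v) (inv g))) with (mul (conj g u) (conj g v))
      by (unfold conj; group_simpl; reflexivity).
    apply gen_mul; assumption.
  - intros u Hu.
    replace (mul g (mul (inv u) (inv g))) with (inv (conj g u))
      by (unfold conj; group_simpl; reflexivity).
    apply gen_inv, Hu.
Qed.

Lemma normal_product_subgroup (N K : subset A) :
  is_mul_subgroup A N -> (forall g x, N x -> N (conj g x)) ->
  is_mul_subgroup A K -> is_mul_subgroup A (mul_set N K).
Proof.
  intros [N1 [NM NI]] Nnormal [K1 [KM KI]]. split; [|split].
  - exists one, one. repeat split; try assumption. group_simpl. reflexivity.
  - intros x y [n1 [k1 [Hn1 [Hk1 ->]]]] [n2 [k2 [Hn2 [Hk2 ->]]]].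
    exists (mul n1 (conj k1 n2)), (mul k1 k2).
    repeat split; auto. unfold conj. group_simpl. reflexivity.
  - intros x [n [k [Hn [Hk ->]]]].
    exists (conj (inv k) (inv n)), (inv k).
    repeat split; auto. unfold conj. group_simpl. reflexivity.
Qed.

End GeneratedSubgroups.

Arguments conj {A}.

Section TrivialFactorization.
Variable A : SkewBrace.
Variables B C : subset A.
Hypothesis B_subgroup : is_mul_subgroup A B.
Hypothesis C_subgroup : is_mul_subgroup A C.
Hypothesis B_trivial : is_trivial_on B.
Hypothesis C_trivial : is_trivial_on C.
Hypothesis mul_factorization : forall a : A, mul_set B C a.

(* A = B·C forces A = C·B, by factoring a⁻¹. *)
Lemma mul_factorization_swap (a : A) : mul_set C B a.
Proof.
  destruct B_subgroup as [_ [_ BI]]. destruct C_subgroup as [_ [_ CI]].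
  destruct (mul_factorization (inv a)) as [b [c [Hb [Hc E]]]].
  exists (inv c), (inv b). repeat split; auto.
  rewrite <- (inv_inv A a), E. group_simpl. reflexivity.
Qed.

Lemma star_trivial (X : subset A) (x y : A) :
  is_trivial_on X -> X x -> X y -> star x y = one.
Proof. intros TX Hx Hy. unfold star. rewrite TX by assumption. group_simpl. reflexivity. Qed.

(* b*z ∈ B*C for b ∈ B: write z = cb' and expand b*(cb'), where b*b' = 1. *)
Lemma star_B_any (b z : A) : B b -> star_set B C (star b z).
Proof.
  intro Hb. destruct (mul_factorization_swap z) as [c [b' [Hc [Hb' ->]]]].
  rewrite star_mul_r, (star_trivial B b b') by assumption. group_simpl.
  apply gen_sub. exists b, c. auto.
Qed.

(* Symmetrically c*z ∈ C*B for c ∈ C, using z = bc'. *)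
Lemma star_C_any (c z : A) : C c -> star_set C B (star c z).
Proof.
  intro Hc. destruct (mul_factorization z) as [b [c' [Hb [Hc' ->]]]].
  rewrite star_mul_r, (star_trivial C c c') by assumption. group_simpl.
  apply gen_sub. exists c, b. auto.
Qed.

(* B*C is normal in (A,·): g(b*c)g⁻¹ = (b*g)⁻¹ (b*(gc)). *)
Lemma star_BC_normal (g x : A) : star_set B C x -> star_set B C (conj g x).
Proof.
  apply gen_normal. intros h s [b [c [Hb [Hc ->]]]].
  replace (conj h (star b c)) with (mul (inv (star b h)) (star b (mul h c)))
    by (rewrite star_mul_r; unfold conj; group_simpl; reflexivity).
  apply gen_mul; [apply gen_inv|]; apply star_B_any; assumption.
Qed.

Hypothesis circ_factorization : forall a : A, circ_set B C a.

(* Every generator x*y of A*A lies in (B*C)·(C*B): write x = b∘c and expand. *)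
Lemma star_in_product (x y : A) :
  mul_set (star_set B C) (star_set C B) (star x y).
Proof.
  destruct (circ_factorization x) as [b [c [Hb [Hc ->]]]].
  rewrite star_circ_l.
  exists (mul (star b (star c y)) (conj (star c y) (star b y))), (star c y).
  repeat split.
  - apply gen_mul; [| apply star_BC_normal]; apply star_B_any; assumption.
  - apply star_C_any, Hc.
  - unfold conj. group_simpl. reflexivity.
Qed.

End TrivialFactorization.

Lemma star_set_sub_full (A : SkewBrace) (X Y : subset A) (x : A) :
  star_set X Y x -> star_set full_set full_set x.
Proof.
  apply gen_mono. intros s [u [v [_ [_ E]]]]. exists u, v. repeat split; assumption.
Qed.

Theorem proposition3p3 (A : SkewBrace) (B C : A -> Prop) :
  is_sub_skew_brace B -> is_sub_skew_brace C ->
  (forall a : A, mul_set B C a) ->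
  (forall a : A, circ_set B C a) ->
  is_trivial_on B -> is_trivial_on C ->
  forall a : A,
    star_set full_set full_set a <->
    mul_set (star_set B C) (star_set C B) a.
Proof.
  intros [HB _] [HC _] HmulBC HcircBC TB TC a. split.
  - (* A*A is the least subgroup containing the x*y, and (B*C)·(C*B) is one. *)
    intro Ha. apply Ha.
    + apply normal_product_subgroup; try apply gen_is_subgroup.
      intros g x. apply star_BC_normal; assumption.
    + intros s [x [y [_ [_ ->]]]]. apply star_in_product; assumption.
  - intros [u [v [Hu [Hv ->]]]].
    apply gen_mul; eapply star_set_sub_full; eassumption.
Qed.
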